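(* In the setting below, assume $Z^j\epsilon_{\bullet,j}\neq0$ for all $j$. If for some constant $c>1$ the penalty level satisfies $$\lambda\ge\frac{c+1}{c-1}\max_{i\in[n]}\Big(\sum_{j\in[p]}\frac{(Z^j_{i,\bullet}\epsilon_{\bullet,j})^2}{\|Z^j\epsilon_{\bullet,j}\|_2^2}\Big)^{1/2},$$ then $\|\widehat\Delta_{O^c,\bullet}\|_{2,1}\le c\,\|\widehat\Delta_{O,\bullet}\|_{2,1}$.
   Context: Setting. Let $n,p\ge 1$, $[n]=\{1,\dots,n\}$. $X=Y+E^*\in\mathbb R^{n\times p}$ where (C1) the rows of $Y$ are independent $\mathcal N_p(\mu^*,\Sigma^* )$, $\Sigma^*$ positive definite; (C2) $E^*$ deterministic, $[n]=I\cup O$ a partition with the rows of $E^*$ indexed by $I$ equal to zero, and every row of $E^*(\Sigma^* )^{-1/2}$ of Euclidean norm at most $M_E\sqrt p$; $\mu^*=0$. $\Omega^*=(\Sigma^* )^{-1}$ with diagonal entries $\omega^*_{jj}$, $B^*=\Omega^*\mathrm{diag}(\Omega^* )^{-1}$, $X^{(n)}=X/\sqrt n$, $\Theta^*=E^*B^*/\sqrt n$, $\xi=X^{(n)}B^*-\Theta^*$, $\epsilon_{ij}=\sqrt n(\omega^*_{jj})^{1/2}\xi_{ij}$ (each column $\epsilon_{\bullet,j}$ is $\mathcal N_n(0,I_n)$ and independent of $X_{\bullet,j^c}$). Notation: $A_{i,\bullet}$, $A_{\bullet,j}$ rows/columns, $A_{K,\bullet}$ rows indexed by $K$, $j^c=[p]\setminus\{j\}$,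 $O^c=I$, $\|A\|_{q_1,q_2}=(\sum_i\|A_{i,\bullet}\|_{q_1}^{q_2})^{1/q_2}$. $Z^j$ is the orthogonal projector in $\mathbb R^n$ onto the orthogonal complement of the span of the columns of $X_{\bullet,j^c}$. Estimator: $\widehat\Theta$ minimizes over $\Theta\in\mathbb R^{n\times p}$ the function $\sum_{j=1}^p\|Z^j(X^{(n)}_{\bullet,j}-\Theta_{\bullet,j})\|_2+\lambda\|\Theta\|_{2,1}$, and $\widehat\Delta=\widehat\Theta-\Theta^*$. *)

From HB Require Import structures.
From mathcomp Require Import all_boot all_order all_algebra.
Set Implicit Arguments. Unset Strict Implicit. Unset Printing Implicit Defensive.
Import Order.TTheory GRing.Theory Num.Theory.
Local Open Scope ring_scope.

Section Defs.
Variable R : rcfType.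

Definition norm2 (m k : nat) (A : 'M[R]_(m, k)) : R :=
  Num.sqrt (\sum_(i < m) \sum_(j < k) A i j ^+ 2).

Definition norm21 (m k : nat) (A : 'M[R]_(m, k)) : R :=
  \sum_(i < m) norm2 (row i A).

Definition norm21_on (m k : nat) (K : {set 'I_m}) (A : 'M[R]_(m, k)) : R :=
  \sum_(i in K) norm2 (row i A).

Definition posdef (p : nat) (S : 'M[R]_p) : Prop :=
  S^T = S /\ forall v : 'rV[R]_p, v != 0 -> 0 < (v *m S *m v^T) 0 0.

(* P is the orthogonal projector (symmetric idempotent) whose range is the
   row space of S *)
Definition orth_proj (n m : nat) (P : 'M[R]_n) (S : 'M[R]_(m, n)) : Prop :=
  P^T = P /\ P *m P = P /\ (P == S)%MS.

(* Z^j : orthogonal projector onto the orthogonal complement of the span of the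
   columns of X_{.,j^c}; that complement is {u | u *m X_{.,j^c} = 0} = kermx. *)
Definition is_Zj (n p : nat) (X : 'M[R]_(n, p)) (j : 'I_p) (P : 'M[R]_n) : Prop :=
  orth_proj P (kermx (col' j X)).

Definition Omega (p : nat) (Sigma : 'M[R]_p) : 'M[R]_p := invmx Sigma.

(* Bstar = Omega diag(Omega)^{-1} *)
Definition Bstar (p : nat) (Sigma : 'M[R]_p) : 'M[R]_p :=
  \matrix_(k, j) (Omega Sigma k j / Omega Sigma j j).

Definition Xn (n p : nat) (X : 'M[R]_(n, p)) : 'M[R]_(n, p) :=
  (Num.sqrt (n%:R))^-1 *: X.

Definition Thetastar (n p : nat) (Sigma : 'M[R]_p) (E : 'M[R]_(n, p)) : 'M[R]_(n, p) :=
  (Num.sqrt (n%:R))^-1 *: (E *m Bstar Sigma).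

Definition xi (n p : nat) (Sigma : 'M[R]_p) (X E : 'M[R]_(n, p)) : 'M[R]_(n, p) :=
  Xn X *m Bstar Sigma - Thetastar Sigma E.

Definition eps (n p : nat) (Sigma : 'M[R]_p) (X E : 'M[R]_(n, p)) : 'M[R]_(n, p) :=
  \matrix_(i, j) (Num.sqrt (n%:R) * Num.sqrt (Omega Sigma j j) * xi Sigma X E i j).

Definition objective (n p : nat) (X : 'M[R]_(n, p)) (Z : 'I_p -> 'M[R]_n)
    (lambda : R) (Theta : 'M[R]_(n, p)) : R :=
  \sum_(j < p) norm2 (Z j *m (col j (Xn X) - col j Theta)) + lambda * norm21 Theta.

End Defs.

From HB Require Import structures.
From mathcomp Require Import all_boot all_order all_algebra.
From mathcomp Require Import ring lra.
Set Implicit Arguments. Unset Strict Implicit. Unset Printing Implicit Defensive.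
Import Order.TTheory GRing.Theory Num.Theory.
Local Open Scope ring_scope.

(* Comparing the objective at [Thetahat] with its value at [Theta*] gives the basic
   inequality [lam (|Thetahat|_{2,1} - |Theta*|_{2,1}) <= sum_j (|a_j| - |a_j - Z^j Delta_j|)]
   with [a_j = Z^j (X^(n)_j - Theta*_j)].  Because [Z^j] kills the other columns of [X] and
   [B*_jj = 1], [Z^j eps_j] is a positive multiple of [a_j]; convexity of the norm then bounds
   each summand by [<Z^j eps_j, Delta_j> / |Z^j eps_j|], and Cauchy-Schwarz row by row bounds
   the sum by [m |Delta|_{2,1}], where [m] is the maximum in the condition on [lam].  Since
   [Theta*] vanishes off [O], the left side is at least [lam (|Delta_{O^c}| - |Delta_O|)], and
   the choice of [lam] turns this into the cone condition. *)

Section FiniteSums.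
Variables (R : rcfType) (I : finType).
Implicit Types f g : I -> R.

Definition sumsq f := \sum_i f i ^+ 2.
Definition dotf f g := \sum_i f i * g i.

Lemma sumsq_ge0 f : 0 <= sumsq f.
Proof. by apply: sumr_ge0 => i _; rewrite sqr_ge0. Qed.

Lemma sumsq_eq0 f : sumsq f = 0 -> forall i, f i = 0.
Proof.
move=> f0 i; apply/eqP; rewrite -sqrf_eq0; apply/eqP.
by apply: (psumr_eq0P (fun i _ => sqr_ge0 (f i)) f0).
Qed.

Lemma sqr_sqrt_sumsq f : Num.sqrt (sumsq f) ^+ 2 = sumsq f.
Proof. by rewrite sqr_sqrtr // sumsq_ge0. Qed.

Lemma dotf_le_sqrt_sumsq f g :
  dotf f g <= Num.sqrt (sumsq f) * Num.sqrt (sumsq g).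
Proof.
set a := Num.sqrt (sumsq f); set b := Num.sqrt (sumsq g).
have [a0 b0] : 0 <= a /\ 0 <= b by split; apply: sqrtr_ge0.
have [a_eq0|a_neq0] := eqVneq a 0.
  have f0 : sumsq f = 0 by rewrite -sqr_sqrt_sumsq -/a a_eq0 expr0n.
  by rewrite a_eq0 mul0r /dotf big1 // => i _; rewrite (sumsq_eq0 f0) mul0r.
have [b_eq0|b_neq0] := eqVneq b 0.
  have g0 : sumsq g = 0 by rewrite -sqr_sqrt_sumsq -/b b_eq0 expr0n.
  by rewrite b_eq0 mulr0 /dotf big1 // => i _; rewrite (sumsq_eq0 g0) mulr0.
(* expanding [0 <= sum (b f_i - a g_i)^2] gives [2 a b <f, g> <= 2 a^2 b^2] *)
have : 0 <= \sum_i (b * f i - a * g i) ^+ 2 by apply: sumr_ge0 => i _; apply: sqr_ge0.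
have -> : \sum_i (b * f i - a * g i) ^+ 2
    = b ^+ 2 * sumsq f + a ^+ 2 * sumsq g - (2 * a * b) * dotf f g.
  rewrite /sumsq /dotf !mulr_sumr -big_split -sumrB /=.
  by apply: eq_bigr => i _; ring.
rewrite -[sumsq f]sqr_sqrt_sumsq -[sumsq g]sqr_sqrt_sumsq -/a -/b.
have : 0 < a * b by rewrite mulr_gt0 // lt_def ?a_neq0 ?b_neq0.
nra.
Qed.

Lemma sumsqD f g : sumsq (fun i => f i + g i) = sumsq f + sumsq g + 2 * dotf f g.
Proof. by rewrite /sumsq /dotf mulr_sumr -!big_split /=; apply: eq_bigr => i _; ring. Qed.

Lemma sqrt_sumsqD_le f g :
  Num.sqrt (sumsq (fun i => f i + g i)) <= Num.sqrt (sumsq f) + Num.sqrt (sumsq g).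
Proof.
have [a0 b0] := (sqrtr_ge0 (sumsq f), sqrtr_ge0 (sumsq g)).
rewrite -(ger0_norm (addr_ge0 a0 b0)) -sqrtr_sqr ler_sqrt ?sqr_ge0 // sumsqD.
have := dotf_le_sqrt_sumsq f g; have := sqr_sqrt_sumsq f; have := sqr_sqrt_sumsq g.
set a := Num.sqrt (sumsq f); set b := Num.sqrt (sumsq g) => <- <-.
nra.
Qed.

Lemma sqrt_sumsqZ k f :
  Num.sqrt (sumsq (fun i => k * f i)) = `|k| * Num.sqrt (sumsq f).
Proof.
rewrite -sqrtr_sqr -sqrtrM ?sqr_ge0 // /sumsq mulr_sumr.
by congr Num.sqrt; apply: eq_bigr => i _; rewrite exprMn.
Qed.

End FiniteSums.

Section FrobeniusNorm.
Variable R : rcfType.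

Definition mxdot m k (A B : 'M[R]_(m, k)) := \sum_i \sum_j A i j * B i j.

Lemma norm2E m k (A : 'M[R]_(m, k)) :
  norm2 A = Num.sqrt (sumsq (fun ij : 'I_m * 'I_k => A ij.1 ij.2)).
Proof. by rewrite /norm2 /sumsq pair_big. Qed.

Lemma mxdotE m k (A B : 'M[R]_(m, k)) :
  mxdot A B = dotf (fun ij : 'I_m * 'I_k => A ij.1 ij.2) (fun ij => B ij.1 ij.2).
Proof. by rewrite /mxdot /dotf pair_big. Qed.

Lemma norm2_ge0 m k (A : 'M[R]_(m, k)) : 0 <= norm2 A.
Proof. exact: sqrtr_ge0. Qed.

Lemma mxdot_le_norm2 m k (A B : 'M[R]_(m, k)) : mxdot A B <= norm2 A * norm2 B.
Proof. by rewrite mxdotE !norm2E; apply: dotf_le_sqrt_sumsq. Qed.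

Lemma norm2D_le m k (A B : 'M[R]_(m, k)) : norm2 (A + B) <= norm2 A + norm2 B.
Proof.
have -> : norm2 (A + B) = Num.sqrt (sumsq (fun ij => A ij.1 ij.2 + B ij.1 ij.2)).
  by rewrite norm2E; congr Num.sqrt; apply: eq_bigr => ij _; rewrite mxE.
by rewrite !norm2E sqrt_sumsqD_le.
Qed.

Lemma norm2Z m k (a : R) (A : 'M[R]_(m, k)) : norm2 (a *: A) = `|a| * norm2 A.
Proof.
rewrite !norm2E -sqrt_sumsqZ; congr Num.sqrt.
by apply: eq_bigr => ij _; rewrite mxE.
Qed.

Lemma norm2N m k (A : 'M[R]_(m, k)) : norm2 (- A) = norm2 A.
Proof. by rewrite -scaleN1r norm2Z normrN normr1 mul1r. Qed.

Lemma norm2_0 m k : norm2 (0 : 'M[R]_(m, k)) = 0.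
Proof. by rewrite -(scale0r 0) norm2Z normr0 mul0r. Qed.

Lemma sqr_norm2 m k (A : 'M[R]_(m, k)) : norm2 A ^+ 2 = mxdot A A.
Proof. by rewrite norm2E sqr_sqrt_sumsq mxdotE; apply: eq_bigr => ij _; rewrite expr2. Qed.

Lemma norm2_gt0 m k (A : 'M[R]_(m, k)) : A != 0 -> 0 < norm2 A.
Proof.
move=> A_neq0; rewrite norm2E sqrtr_gt0 lt_def sumsq_ge0 andbT.
apply: contra A_neq0 => /eqP/sumsq_eq0 A0; apply/eqP/matrixP => i j.
by rewrite mxE (A0 (i, j)).
Qed.

Lemma mxdotBr m k (A B C : 'M[R]_(m, k)) : mxdot A (B - C) = mxdot A B - mxdot A C.
Proof.
rewrite /mxdot -sumrB; apply: eq_bigr => i _; rewrite -sumrB.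
by apply: eq_bigr => j _; rewrite !mxE mulrBr.
Qed.

Lemma mxdotZl m k a (A B : 'M[R]_(m, k)) : mxdot (a *: A) B = a * mxdot A B.
Proof.
rewrite /mxdot mulr_sumr; apply: eq_bigr => i _; rewrite mulr_sumr.
by apply: eq_bigr => j _; rewrite !mxE mulrA.
Qed.

Lemma mxdot_trace m k (A B : 'M[R]_(m, k)) : mxdot A B = \tr (A^T *m B).
Proof.
rewrite /mxtrace /mxdot exchange_big; apply: eq_bigr => j _; rewrite mxE.
by apply: eq_bigr => i _; rewrite mxE.
Qed.

Lemma mxdot_mulmxr m k l (A : 'M[R]_(m, k)) (P : 'M[R]_(m, l)) (B : 'M[R]_(l, k)) :
  mxdot A (P *m B) = mxdot (P^T *m A) B.
Proof. by rewrite !mxdot_trace mulmxA trmx_mul trmxK. Qed.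

Lemma norm2B_ge_tangent m k (A B : 'M[R]_(m, k)) : A != 0 ->
  norm2 A - mxdot A B / norm2 A <= norm2 (A - B).
Proof.
move=> /norm2_gt0 A_gt0.
have -> : norm2 A - mxdot A B / norm2 A = (norm2 A ^+ 2 - mxdot A B) / norm2 A.
  by field; rewrite gt_eqF.
by rewrite ler_pdivrMr // sqr_norm2 -mxdotBr mulrC mxdot_le_norm2.
Qed.

Lemma mxdot_normalize m k a (A B : 'M[R]_(m, k)) : 0 < a ->
  mxdot (a *: A) B / norm2 (a *: A) = mxdot A B / norm2 A.
Proof.
move=> a_gt0; rewrite mxdotZl norm2Z gtr0_norm // invfM mulrACA.
by rewrite divff ?gt_eqF // mul1r.
Qed.

End FrobeniusNorm.

Section RowNorms.
Variables (R : rcfType) (m k : nat).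
Implicit Types A D T U : 'M[R]_(m, k).

Lemma norm21_on_ge0 (K : {set 'I_m}) A : 0 <= norm21_on K A.
Proof. by apply: sumr_ge0 => i _; apply: norm2_ge0. Qed.

Lemma norm21_setC (K : {set 'I_m}) A : norm21 A = norm21_on K A + norm21_on (~: K) A.
Proof.
rewrite /norm21 /norm21_on (bigID (mem K)) /=; congr (_ + _).
by apply: eq_bigl => i; rewrite in_setC.
Qed.

(* Rows of [T] outside [K] vanish, so there [T + D] has the rows of [D], while on
   [K] the reverse triangle inequality only loses [||D_i||]. *)
Lemma norm21_support_lb (K : {set 'I_m}) T D :
    (forall i, i \notin K -> row i T = 0) ->
  norm21_on (~: K) D - norm21_on K D <= norm21 (T + D) - norm21 T.
Proof.
move=> T_supp; rewrite (norm21_setC K (T + D)) (norm21_setC K T).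
have on_K : - norm21_on K D <= norm21_on K (T + D) - norm21_on K T.
  rewrite /norm21_on -sumrN -sumrB; apply: ler_sum => i _.
  have := norm2D_le (row i (T + D)) (- row i D).
  by rewrite linearD /= addrK norm2N; lra.
have off_K : norm21_on (~: K) D = norm21_on (~: K) (T + D) - norm21_on (~: K) T.
  rewrite /norm21_on -sumrB; apply: eq_bigr => i; rewrite in_setC => /T_supp T_i0.
  by rewrite linearD /= T_i0 add0r norm2_0 subr0.
lra.
Qed.

Lemma mxdot_le_max_row_norm21 U D :
  mxdot U D <= \big[Num.max/0]_(i < m) norm2 (row i U) * norm21 D.
Proof.
rewrite /norm21 mulr_sumr; apply: ler_sum => i _.
have -> : \sum_(j < k) U i j * D i j = mxdot (row i U) (row i D).
  by rewrite /mxdot big_ord1; apply: eq_bigr => j _; rewrite !mxE.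
apply: le_trans (mxdot_le_norm2 _ _) _; apply: ler_wpM2r; first exact: norm2_ge0.
exact: (le_bigmax 0 (fun i => norm2 (row i U)) i).
Qed.

Lemma max_row_norm2_gt0 U : U != 0 -> 0 < \big[Num.max/0]_(i < m) norm2 (row i U).
Proof.
move=> U_neq0; have [i row_i_neq0] : exists i, row i U != 0.
  apply/existsP; apply: contraR U_neq0 => /existsPn rows0; apply/eqP/row_matrixP => i.
  by rewrite row0; apply/eqP; rewrite -[_ == _]negbK rows0.
apply: lt_le_trans (norm2_gt0 row_i_neq0) _.
exact: (le_bigmax 0 (fun i => norm2 (row i U)) i).
Qed.

End RowNorms.

Section Columns.
Variables (R : rcfType) (n p : nat).

Lemma mxdot_cols (A B : 'M[R]_(n, p)) : mxdot A B = \sum_j mxdot (col j A) (col j B).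
Proof.
rewrite /mxdot exchange_big; apply: eq_bigr => j _.
by apply: eq_bigr => i _; rewrite big_ord1 !mxE.
Qed.

Definition normalized_cols (e : 'I_p -> 'cV[R]_n) : 'M[R]_(n, p) :=
  \matrix_(i, j) (e j i 0 / norm2 (e j)).

Lemma col_normalized_cols e j : col j (normalized_cols e) = (norm2 (e j))^-1 *: e j.
Proof. by apply/matrixP => i l; rewrite (ord1 l) !mxE mulrC. Qed.

Lemma norm2_row_normalized_cols e i :
  norm2 (row i (normalized_cols e))
  = Num.sqrt (\sum_j (e j i ord0) ^+ 2 / norm2 (e j) ^+ 2).
Proof.
by rewrite /norm2 big_ord1; congr Num.sqrt; apply: eq_bigr => j _; rewrite !mxE expr_div_n.
Qed.

Lemma mxdot_normalized_cols e (D : 'M[R]_(n, p)) :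
  mxdot (normalized_cols e) D = \sum_j mxdot (e j) (col j D) / norm2 (e j).
Proof.
rewrite mxdot_cols; apply: eq_bigr => j _.
by rewrite col_normalized_cols mxdotZl mulrC.
Qed.

Lemma normalized_cols_neq0 e j : e j != 0 -> normalized_cols e != 0.
Proof.
move=> ej_neq0; have ej_gt0 := norm2_gt0 ej_neq0; apply: contra ej_neq0 => /eqP e0.
have := col_normalized_cols e j; rewrite e0 linear0 => /esym/eqP.
by rewrite scaler_eq0 invr_eq0 (gt_eqF ej_gt0).
Qed.

Lemma mulmx_col_mulmx_annihilated (P : 'M[R]_n) (Y : 'M[R]_(n, p)) (B : 'M[R]_p) j :
  P *m col' j Y = 0 -> P *m col j (Y *m B) = B j j *: (P *m col j Y).
Proof.
move=> PY0; have PY_off j' : j' != j -> (P *m Y) ^~ j' =1 (fun=> 0).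
  move=> /negPf j'_neq_j i; have [r def_j'|] := unliftP j j'; last first.
    by move=> e; rewrite e eqxx in j'_neq_j.
  have := congr1 (fun M : 'M[R]_(n, p.-1) => M i r) PY0.
  rewrite def_j' !mxE => PY0_ir; rewrite -[RHS]PY0_ir.
  by apply: eq_bigr => l _; rewrite mxE.
rewrite colE mulmxA -colE mulmxA; apply/matrixP => i l.
rewrite (ord1 l) !mxE (bigD1 j) //= big1 => [|r /PY_off ->]; last by rewrite mul0r.
by rewrite addr0 mulrC mxE; congr (_ * _); apply: eq_bigr => k _; rewrite !mxE.
Qed.

Lemma mulmx_col_eps (Sigma : 'M[R]_p) (X E : 'M[R]_(n, p)) (P : 'M[R]_n) j :
    P *m col' j X = 0 ->
  P *m col j (eps Sigma X E)
  = (Num.sqrt n%:R * Num.sqrt (Omega Sigma j j))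
      *: (P *m (col j (Xn X) - col j (Thetastar Sigma E))).
Proof.
move=> PX0; set kap := _ * _.
have -> : col j (eps Sigma X E) = kap *: col j (xi Sigma X E).
  by apply/matrixP => i l; rewrite !mxE.
have [om0|om_neq0] := eqVneq (Omega Sigma j j) 0.
  by rewrite /kap om0 sqrtr0 mulr0 !scale0r mulmx0.
have PXn0 : P *m col' j (Xn X) = 0.
  have -> : col' j (Xn X) = (Num.sqrt n%:R)^-1 *: col' j X.
    by apply/matrixP => i l; rewrite !mxE.
  by rewrite -scalemxAr PX0 scaler0.
rewrite /xi linearB /= -scalemxAr mulmxBr mulmx_col_mulmx_annihilated //.
by rewrite mxE divff // scale1r mulmxBr.
Qed.

Lemma row_Thetastar_eq0 (Sigma : 'M[R]_p) (E : 'M[R]_(n, p)) i :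
  row i E = 0 -> row i (Thetastar Sigma E) = 0.
Proof. by move=> Ei0; rewrite linearZ /= row_mul Ei0 mul0mx scaler0. Qed.

(* With [a := P (x - t)], the loss at [t + d] falls short of the loss at [t] by at
   most the normalised score [<a, d> / ||a||], because the projector [P] fixes [a]. *)
Lemma proj_loss_decrease_le (P : 'M[R]_n) (x t d : 'cV[R]_n) (k : R) :
    P^T = P -> P *m P = P -> 0 < k -> P *m (x - t) != 0 ->
  norm2 (P *m (x - t)) - norm2 (P *m (x - (t + d)))
  <= mxdot (k *: (P *m (x - t))) d / norm2 (k *: (P *m (x - t))).
Proof.
move=> P_sym P_idem k_gt0 a_neq0; rewrite mxdot_normalize //.
have -> : mxdot (P *m (x - t)) d = mxdot (P *m (x - t)) (P *m d).
  by rewrite mxdot_mulmxr P_sym mulmxA P_idem.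
have := norm2B_ge_tangent (P *m d) a_neq0; rewrite opprD addrA [P *m (x - t - d)]mulmxBr; lra.
Qed.

Lemma loss_gap_le_score (Sigma : 'M[R]_p) (X E Theta : 'M[R]_(n, p)) (Z : 'I_p -> 'M[R]_n) :
    (forall j, is_Zj X j (Z j)) -> (forall j, Z j *m col j (eps Sigma X E) != 0) ->
  \sum_j norm2 (Z j *m (col j (Xn X) - col j (Thetastar Sigma E)))
    - \sum_j norm2 (Z j *m (col j (Xn X) - col j Theta))
  <= mxdot (normalized_cols (fun j => Z j *m col j (eps Sigma X E)))
           (Theta - Thetastar Sigma E).
Proof.
move=> Z_proj e_neq0; set T := Thetastar Sigma E.
rewrite mxdot_normalized_cols -sumrB; apply: ler_sum => j _.
have [Z_sym [Z_idem /andP[/sub_kermxP ZX0 _]]] := Z_proj j.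
have := e_neq0 j; rewrite (mulmx_col_eps Sigma E ZX0) scaler_eq0 negb_or.
case/andP=> kap_neq0 a_neq0.
have -> : col j Theta = col j T + col j (Theta - T) by rewrite linearB /= addrC subrK.
by apply: proj_loss_decrease_le => //; rewrite lt_def kap_neq0 mulr_ge0 ?sqrtr_ge0.
Qed.

End Columns.

Lemma cone_of_basic_inequality (R : realFieldType) (lam c m S0 S1 : R) :
  1 < c -> 0 < m -> 0 <= S0 -> 0 <= S1 -> (c + 1) / (c - 1) * m <= lam ->
  lam * (S1 - S0) <= m * (S0 + S1) -> S1 <= c * S0.
Proof.
move=> c_gt1 m_gt0 S0_ge0 S1_ge0 lam_ge basic.
have lam_ge' : (c + 1) * m <= (c - 1) * lam.
  by rewrite -ler_pdivrMl ?subr_gt0 // mulrA (mulrC _ (c + 1)).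
have : (c + 1) * (lam * (S1 - S0)) <= (c - 1) * lam * (S0 + S1).
  apply: le_trans (_ : (c + 1) * m * (S0 + S1) <= _); last by apply: ler_wpM2r; lra.
  by rewrite -mulrA ler_wpM2l //; lra.
have : 0 < lam by nra.
nra.
Qed.

Theorem mainTheorem4 (R : rcfType) (n p : nat) (hn : (0 < n)%N) (hp : (0 < p)%N)
  (Sigma : 'M[R]_p) (Sinvhalf : 'M[R]_p) (E X : 'M[R]_(n, p)) (O : {set 'I_n})
  (M_E : R) (Z : 'I_p -> 'M[R]_n) (lam c : R) (Thetahat : 'M[R]_(n, p)) :
  posdef Sigma ->
  posdef Sinvhalf -> Sinvhalf *m Sinvhalf = invmx Sigma ->
  (forall i, i \notin O -> row i E = 0) ->
  (forall i, norm2 (row i (E *m Sinvhalf)) <= M_E * Num.sqrt (p%:R)) ->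
  (forall j, is_Zj X j (Z j)) ->
  (forall Theta, objective X Z lam Thetahat <= objective X Z lam Theta) ->
  (forall j, Z j *m col j (eps Sigma X E) != 0) ->
  1 < c ->
  (c + 1) / (c - 1) *
    \big[Num.max/0]_(i < n)
      Num.sqrt (\sum_(j < p)
         ((Z j *m col j (eps Sigma X E)) i ord0) ^+ 2
           / (norm2 (Z j *m col j (eps Sigma X E))) ^+ 2)
    <= lam ->
  norm21_on (~: O) (Thetahat - Thetastar Sigma E)
    <= c * norm21_on O (Thetahat - Thetastar Sigma E).
Proof.
move=> _ _ _ E_supp _ Z_proj Thetahat_opt e_neq0 c_gt1 lam_ge.
set T := Thetastar Sigma E; set D := Thetahat - T.
pose e j := Z j *m col j (eps Sigma X E).
rewrite (eq_bigr (fun i => norm2 (row i (normalized_cols e)))) in lam_ge; last first.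
  by move=> i _; rewrite norm2_row_normalized_cols.
set m := \big[Num.max/0]_(i < n) _ in lam_ge.
have m_gt0 : 0 < m := max_row_norm2_gt0 (normalized_cols_neq0 (e_neq0 (Ordinal hp))).
have lam_ge0 : 0 <= lam.
  by apply: le_trans lam_ge; apply: mulr_ge0 (ltW m_gt0); apply: divr_ge0; lra.
have loss_decrease : \sum_j norm2 (Z j *m (col j (Xn X) - col j T))
    - \sum_j norm2 (Z j *m (col j (Xn X) - col j Thetahat)) <= m * norm21 D.
  exact: le_trans (loss_gap_le_score _ Z_proj e_neq0) (mxdot_le_max_row_norm21 _ _).
have basic : lam * (norm21 Thetahat - norm21 T)
    <= \sum_j norm2 (Z j *m (col j (Xn X) - col j T))
       - \sum_j norm2 (Z j *m (col j (Xn X) - col j Thetahat)).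
  by have := Thetahat_opt T; rewrite /objective; lra.
have support : norm21_on (~: O) D - norm21_on O D <= norm21 Thetahat - norm21 T.
  rewrite -[Thetahat](subrK T) -/D [D + T]addrC.
  by apply: norm21_support_lb => i /E_supp; apply: row_Thetastar_eq0.
apply: (cone_of_basic_inequality c_gt1 m_gt0 (norm21_on_ge0 _ _) (norm21_on_ge0 _ _) lam_ge).
rewrite -norm21_setC; apply: le_trans loss_decrease; apply: le_trans basic.
exact: ler_wpM2l.
Qed.
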